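(* Let $R$ be an arithmetic ring such that $\mathrm{Minspec}(R)$ is compact in the Zariski topology and every finitely generated $R$-module has a pure-composition series with indecomposable cyclic factors. Then $\mathrm{Minspec}(R)$ is finite.
   Context: All rings are commutative with identity. $R$ is arithmetic if $R_P$ is a valuation ring for every maximal ideal $P$. $\mathrm{Minspec}(R)$ is the set of minimal prime ideals of $R$ with the Zariski topology. A pure-composition series of $M$ is a finite chain $\{0\}=M_0\subset\dots\subset M_n=M$ of pure submodules (inclusion stays injective after tensoring with any module). *)

From mathcomp Require Import all_boot all_order all_algebra.
From Stdlib Require List.
Set Implicit Arguments. Unset Strict Implicit. Unset Printing Implicit Defensive.
Import GRing.Theory.
Local Open Scope ring_scope.

Section RingDefs.
Variable R : comPzRingType.

Definition ideal (I : R -> Prop) : Prop :=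
  [/\ I 0, (forall x y, I x -> I y -> I (x + y)) & (forall r x, I x -> I (r * x))].

Definition prime_ideal (P : R -> Prop) : Prop :=
  [/\ ideal P, ~ P 1 & (forall a b, P (a * b) -> P a \/ P b)].

Definition maximal_ideal (P : R -> Prop) : Prop :=
  [/\ ideal P, ~ P 1 &
      (forall J, ideal J -> ~ J 1 -> (forall x, P x -> J x) -> forall x, J x -> P x)].

Definition minimal_prime (P : R -> Prop) : Prop :=
  prime_ideal P /\
  (forall Q, prime_ideal Q -> (forall x, Q x -> P x) -> forall x, P x -> Q x).

(* R_P is a valuation ring (any two elements are comparable for divisibility),
   written out in terms of R: a/1 | b/1 or b/1 | a/1 in R_P. *)
Definition localization_is_valuation (P : R -> Prop) : Prop :=
  forall a b : R, exists s c : R, ~ P s /\ (s * b = c * a \/ s * a = c * b).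

Definition arithmetic_ring : Prop :=
  forall P, maximal_ideal P -> localization_is_valuation P.

(* Zariski topology on Minspec(R): the open sets are the traces on Minspec(R)
   of the open sets D(S) = {P | S not contained in P} of Spec(R). *)
Definition minspec_open_D (S : R -> Prop) (P : R -> Prop) : Prop :=
  exists s, S s /\ ~ P s.

Definition minspec_compact : Prop :=
  forall (I : Type) (S : I -> R -> Prop),
    (forall P, minimal_prime P -> exists i, minspec_open_D (S i) P) ->
    exists F : seq I, forall P, minimal_prime P ->
      exists2 i, List.In i F & minspec_open_D (S i) P.

Definition minspec_finite : Prop :=
  exists F : seq (R -> Prop), forall P, minimal_prime P ->
    exists2 Q, List.In Q F & (forall x, P x <-> Q x).

End RingDefs.

Section ModuleDefs.
Variable R : comPzRingType.

Definition submodule (M : lmodType R) (N : M -> Prop) : Prop :=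
  [/\ N 0, (forall x y, N x -> N y -> N (x + y)) & (forall (r : R) x, N x -> N (r *: x))].

Definition fin_generated (M : lmodType R) : Prop :=
  exists n (g : 'I_n -> M), forall m : M, exists c : 'I_n -> R,
    m = \sum_(i < n) c i *: g i.

Definition bilinear_on (M X Y : lmodType R) (N : M -> Prop) (beta : M -> X -> Y) : Prop :=
  [/\ (forall n n' x, N n -> N n' -> beta (n + n') x = beta n x + beta n' x),
      (forall (r : R) n x, N n -> beta (r *: n) x = r *: beta n x),
      (forall n x x', N n -> beta n (x + x') = beta n x + beta n x') &
      (forall (r : R) n x, N n -> beta n (r *: x) = r *: beta n x)].

(* The element \sum_i n_i (x) x_i of N (x)_R X is zero, expressed through the
   universal property of the tensor product: every bilinear map on N x X kills it. *)
Definition tensor_zero (M X : lmodType R) (N : M -> Prop) (s : seq (M * X)) : Prop :=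
  forall (Y : lmodType R) (beta : M -> X -> Y), bilinear_on N beta ->
    \sum_(p <- s) beta p.1 p.2 = 0.

(* N is a pure submodule of M: N (x) X -> M (x) X is injective for every X. *)
Definition pure_submodule (M : lmodType R) (N : M -> Prop) : Prop :=
  submodule N /\
  forall (X : lmodType R) (s : seq (M * X)),
    (forall p, List.In p s -> N p.1) ->
    tensor_zero (fun _ => True) s -> tensor_zero N s.

Definition cyclic_factor (M : lmodType R) (A B : M -> Prop) : Prop :=
  exists m, B m /\ forall x, B x <-> exists a (r : R), A a /\ x = a + r *: m.

(* The factor B/A is indecomposable: nonzero, and not the direct sum of two
   nonzero submodules (via the correspondence theorem: no submodules C, D with
   A <= C, D <= B, C + D = B, C /\ D = A, C <> A, D <> A). *)
Definition indecomposable_factor (M : lmodType R) (A B : M -> Prop) : Prop :=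
  (exists x, B x /\ ~ A x) /\
  ~ (exists C D : M -> Prop,
       submodule C /\ submodule D /\
       ((forall x, A x -> C x) /\ (forall x, A x -> D x)) /\
       ((forall x, C x -> B x) /\ (forall x, D x -> B x)) /\
       (forall x, B x <-> exists c d, C c /\ D d /\ x = c + d) /\
       (forall x, C x /\ D x <-> A x) /\
       (exists x, C x /\ ~ A x) /\ (exists x, D x /\ ~ A x)).

Definition has_pure_indec_cyclic_series (M : lmodType R) : Prop :=
  exists (n : nat) (Ms : nat -> M -> Prop),
    [/\ (forall x, Ms 0%N x <-> x = 0),
        (forall x, Ms n x),
        (forall i, (i <= n)%N -> pure_submodule (Ms i)),
        (forall i, (i < n)%N ->
           (forall x, Ms i x -> Ms i.+1 x) /\ (exists x, Ms i.+1 x /\ ~ Ms i x)) &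
        (forall i, (i < n)%N ->
           cyclic_factor (Ms i) (Ms i.+1) /\ indecomposable_factor (Ms i) (Ms i.+1))].

End ModuleDefs.

(* In an arithmetic ring every prime lies over a unique minimal prime: below a
   maximal ideal P it is the contraction N_P of the nilradical of the valuation
   ring R_P.  Hence distinct minimal primes p, q are comaximal, s + t = 1 with
   s in p and t in q.  Compactness of Minspec(R) gives finitely many v_i killing
   a power of s such that every minimal prime containing s misses some v_i; the
   ideals of elements killing a power of s, resp. of every v_i, are then
   comaximal with locally nilpotent product, which produces an idempotent e with
   e outside p and 1 - e outside q.  Now take a pure-composition series of the
   module R.  Each minimal prime p has a first index i with M_(i+1) not inside
   p; two distinct minimal primes with the same index would let e split the
   indecomposable factor M_(i+1)/M_i.  So Minspec(R) injects into the indices. *)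

From mathcomp Require Import all_boot all_order all_algebra.
From mathcomp Require Import boolp classical_sets ring.
From Stdlib Require Import Classical.
From Stdlib Require List.
Import GRing.Theory.
Local Open Scope ring_scope.
Set Implicit Arguments. Unset Strict Implicit.

Section Ideals.
Variable R : comPzRingType.
Implicit Types (I J P Q r : R -> Prop) (a b s x y : R).

Lemma ideal0 I : ideal I -> I 0.
Proof. by case. Qed.

Lemma idealD I x y : ideal I -> I x -> I y -> I (x + y).
Proof. by case=> _ + _; apply. Qed.

Lemma ideal_mull I a b : ideal I -> I b -> I (a * b).
Proof. by case=> _ _; apply. Qed.

Lemma ideal_mulr I a b : ideal I -> I a -> I (a * b).
Proof. by move=> iI Ia; rewrite mulrC; apply: ideal_mull. Qed.

Definition ideal_add I J : R -> Prop := fun z => exists x y, [/\ I x, J y & z = x + y].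

Lemma ideal_addl I J x : ideal J -> I x -> ideal_add I J x.
Proof. by move=> iJ Ix; exists x, 0; split => //; [exact: ideal0 | rewrite addr0]. Qed.

Lemma ideal_addr I J y : ideal I -> J y -> ideal_add I J y.
Proof. by move=> iI Jy; exists 0, y; split => //; [exact: ideal0 | rewrite add0r]. Qed.

Lemma ideal_ideal_add I J : ideal I -> ideal J -> ideal (ideal_add I J).
Proof.
move=> iI iJ; split.
- by exists 0, 0; split; [exact: ideal0 | exact: ideal0 | rewrite addr0].
- move=> _ _ [x [y [Ix Jy ->]]] [x' [y' [Ix' Jy' ->]]].
  by exists (x + x'), (y + y'); split; [exact: idealD | exact: idealD | ring].
- move=> a _ [x [y [Ix Jy ->]]].
  by exists (a * x), (a * y); split; [exact: ideal_mull | exact: ideal_mull | ring].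
Qed.

Lemma ideal_bigcup_chain (F : set (set R)) :
  (forall X, F X -> ideal X) -> total_on F subset -> (exists X, F X) ->
  ideal (\bigcup_(X in F) X)%classic.
Proof.
move=> idF Ftot [X0 FX0]; split.
- by exists X0 => //; apply: ideal0; apply: idF.
- move=> x y [X FX Xx] [Y FY Yy].
  case: (Ftot X Y FX FY) => [XY|YX].
  + by exists Y => //; apply: idealD (idF _ FY) (XY _ Xx) Yy.
  + by exists X => //; apply: idealD (idF _ FX) Xx (YX _ Yy).
- by move=> a x [X FX Xx]; exists X => //; apply: ideal_mull (idF _ FX) Xx.
Qed.

Lemma exists_maximal_ideal J : ideal J -> ~ J 1 ->
  exists2 P, maximal_ideal P & forall x, J x -> P x.
Proof.
move=> iJ J1.
pose above I := [/\ ideal I, ~ I 1 & forall x, J x -> I x].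
pose T := {I | above I}.
pose le (A B : T) := `[< (sval A `<=` sval B)%classic >].
have [[M aboveM] Mmax] : exists t : T, premaximal le t.
  apply: (ZL_preorder (exist _ J (And3 iJ J1 (fun x Jx => Jx)))).
  - by move=> A; apply/asboolP.
  - by move=> A B C /asboolP AB /asboolP BC; apply/asboolP => x /AB /BC.
  move=> C Ctot.
  pose G := ([set J] `|` [set sval A | A in C])%classic.
  have aboveG X : G X -> above X by case=> [->|[A _ <-]]; [split | case: A].
  have aboveU : above (\bigcup_(X in G) X)%classic.
    split.
    - apply: ideal_bigcup_chain; last by exists J; left.
        by move=> X /aboveG [].
      move=> X Y GX GY; case: GX => [->|[A CA <-]].
        by left; case: (aboveG _ GY).
      case: GY => [->|[B CB <-]].
        by right; case: (aboveG _ (or_intror (imageP _ CA))).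
      by case: (Ctot A B CA CB) => /asboolP; [left | right].
    - by case=> X /aboveG [].
    - by move=> x Jx; exists J => //; left.
  exists (exist _ _ aboveU) => A CA; apply/asboolP => x Ax.
  by exists (sval A) => //; right; exists A.
have [iM M1 JM] := aboveM.
exists M => //; split => // I iI I1 MI.
have aboveI : above I by split => // x /JM /MI.
have /Mmax /asboolP IM : le (exist _ M aboveM) (exist _ I aboveI) by apply/asboolP.
exact: IM.
Qed.

Lemma ideal1_of_maximal_avoided J : ideal J ->
  (forall P, maximal_ideal P -> exists2 x, J x & ~ P x) -> J 1.
Proof.
move=> iJ avoid; apply: NNPP => J1.
have [P mP JP] := exists_maximal_ideal iJ J1.
by have [x /JP Px] := avoid P mP.
Qed.

Lemma prime_notinM P a b : prime_ideal P -> ~ P a -> ~ P b -> ~ P (a * b).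
Proof. by case=> _ _ PM Pa Pb /PM []. Qed.

Lemma prime_notinX P a k : prime_ideal P -> ~ P a -> ~ P (a ^+ k).
Proof.
move=> pP Pa; elim: k => [|k IHk]; first by rewrite expr0; case: pP.
by rewrite exprS; apply: prime_notinM.
Qed.

Lemma prime_inX P a k : prime_ideal P -> P (a ^+ k) -> P a.
Proof. by move=> pP Pak; apply: NNPP => Pa; apply: prime_notinX pP Pa Pak. Qed.

Definition principal a : R -> Prop := fun z => exists c, z = c * a.

Lemma ideal_principal a : ideal (principal a).
Proof.
split; first by exists 0; rewrite mul0r.
- by move=> _ _ [c ->] [d ->]; exists (c + d); rewrite mulrDl.
- by move=> r _ [c ->]; exists (r * c); rewrite mulrA.
Qed.

Lemma maximal_prime P : maximal_ideal P -> prime_ideal P.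
Proof.
move=> [iP P1 Pmax]; split => // a b Pab.
have [Pa|Pa] := classic (P a); [by left | right].
have iPa := ideal_ideal_add iP (ideal_principal a).
have [p [_ [Pp [c ->] E]]] : ideal_add P (principal a) 1.
  apply: NNPP => Pa1; apply: Pa; apply: (Pmax _ iPa Pa1).
    by move=> x; apply: ideal_addl (ideal_principal a).
  by apply: ideal_addr iP _; exists 1; rewrite mul1r.
have -> : b = p * b + c * (a * b) by rewrite mulrA -mulrDl -E mul1r.
by apply: idealD => //; [exact: ideal_mulr | exact: ideal_mull].
Qed.

Definition ann_pow b : R -> Prop := fun a => exists k, a * b ^+ k = 0.

Lemma ann_pow_exprD a b k m : a * b ^+ k = 0 -> a * b ^+ (k + m) = 0.
Proof. by move=> abk; rewrite exprD mulrA abk mul0r. Qed.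

Lemma ideal_ann_pow b : ideal (ann_pow b).
Proof.
split; first by exists 0%N; rewrite mul0r.
- move=> x y [k xk] [m ym]; exists (k + m)%N.
  by rewrite mulrDl (ann_pow_exprD m xk) addnC (ann_pow_exprD k ym) addr0.
- by move=> r x [k xk]; exists k; rewrite -mulrA xk mulr0.
Qed.

Lemma prime_ann_pow P a b : prime_ideal P -> ~ P b -> ann_pow b a -> P a.
Proof.
move=> pP Pb [k abk]; have [_ _ PM] := pP.
have /PM [//|/(prime_inX pP)//] : P (a * b ^+ k) by rewrite abk; case: pP => /ideal0.
Qed.

Definition ann_pow_seq (F : seq R) : R -> Prop :=
  fun a => forall v, List.In v F -> ann_pow v a.

Lemma ideal_ann_pow_seq F : ideal (ann_pow_seq F).
Proof.
split; first by move=> v _; apply: ideal0 (ideal_ann_pow v).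
- by move=> x y Fx Fy v Fv; apply: idealD (ideal_ann_pow v) (Fx v Fv) (Fy v Fv).
- by move=> r x Fx v Fv; apply: ideal_mull (ideal_ann_pow v) (Fx v Fv).
Qed.

(* [loc_nil P] is the contraction to [R] of the nilradical of [R_P]. *)
Definition loc_nil P : R -> Prop := fun x => exists2 s, ann_pow x s & ~ P s.

Lemma loc_nil_sub_prime P Q : prime_ideal Q -> (forall x, Q x -> P x) ->
  forall x, loc_nil P x -> Q x.
Proof.
move=> pQ QP x [s [k sxk] Ps]; apply: (prime_inX (k := k) pQ).
have [_ _ /(_ s (x ^+ k)) QM] := pQ.
by case: QM => [|/QP//|//]; rewrite sxk; case: pQ => /ideal0.
Qed.

Section ValuationLocalization.
Variable P : R -> Prop.
Hypotheses (valP : localization_is_valuation P) (pP : prime_ideal P).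

Lemma loc_nilD x y : loc_nil P x -> loc_nil P y -> loc_nil P (x + y).
Proof.
move=> [s [k sxk] Ps] [t [l tyl] Pt].
have [u [c [Pu [E|E]]]] := valP x y.
- exists (s * u ^+ k); last by apply: prime_notinM => //; apply: prime_notinX.
  exists k; have -> : s * u ^+ k * (x + y) ^+ k = s * x ^+ k * (u + c) ^+ k.
    by rewrite -mulrA -exprMn mulrDr E -mulrDl exprMn; ring.
  by rewrite sxk mul0r.
- exists (t * u ^+ l); last by apply: prime_notinM => //; apply: prime_notinX.
  exists l; have -> : t * u ^+ l * (x + y) ^+ l = t * y ^+ l * (c + u) ^+ l.
    by rewrite -mulrA -exprMn mulrDr E -mulrDl exprMn; ring.
  by rewrite tyl mul0r.
Qed.

Lemma loc_nilM a b : loc_nil P (a * b) -> loc_nil P a \/ loc_nil P b.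
Proof.
move=> [s [k sabk] Ps].
have [u [c [Pu [E|E]]]] := valP a b.
- right; exists (s * u ^+ k); last by apply: prime_notinM => //; apply: prime_notinX.
  exists (k + k)%N; have -> : s * u ^+ k * b ^+ (k + k) = s * (a * b) ^+ k * c ^+ k.
    rewrite exprD; transitivity (s * (u * b) ^+ k * b ^+ k); first by rewrite exprMn; ring.
    by rewrite E !exprMn; ring.
  by rewrite sabk mul0r.
- left; exists (s * u ^+ k); last by apply: prime_notinM => //; apply: prime_notinX.
  exists (k + k)%N; have -> : s * u ^+ k * a ^+ (k + k) = s * (a * b) ^+ k * c ^+ k.
    rewrite exprD; transitivity (s * (u * a) ^+ k * a ^+ k); first by rewrite exprMn; ring.
    by rewrite E !exprMn; ring.
  by rewrite sabk mul0r.
Qed.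

Lemma loc_nil_prime : prime_ideal (loc_nil P).
Proof.
split; [split | | exact: loc_nilM].
- by exists 1; [exists 1%N; rewrite expr1 mulr0 | case: pP].
- exact: loc_nilD.
- by move=> r x [s [k sxk] Ps]; exists s => //; exists k; rewrite exprMn mulrCA sxk mulr0.
- by move=> [s [k]]; rewrite expr1n mulr1 => -> []; case: pP => /ideal0.
Qed.

Lemma loc_nil_minimal_prime : minimal_prime (loc_nil P).
Proof.
split; first exact: loc_nil_prime.
move=> Q pQ QN; apply: loc_nil_sub_prime => // x /QN.
exact: loc_nil_sub_prime.
Qed.

Lemma minimal_prime_loc_nil r : minimal_prime r -> (forall x, r x -> P x) ->
  forall x, r x <-> loc_nil P x.
Proof.
move=> [pr rmin] rP x; split; last exact: loc_nil_sub_prime.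
exact: rmin _ loc_nil_prime (loc_nil_sub_prime pr rP) x.
Qed.

End ValuationLocalization.

Lemma minimal_prime_ann_pow r s : arithmetic_ring R -> minimal_prime r -> r s ->
  exists2 y, ann_pow s y & ~ r y.
Proof.
move=> ar mr rs; have [[ir r1 _] _] := mr.
have [P mP rP] := exists_maximal_ideal ir r1.
have [y sy Py] := (minimal_prime_loc_nil (ar P mP) (maximal_prime mP) mr rP s).1 rs.
by exists y => // /rP.
Qed.

Lemma loc_nil_seq P F : prime_ideal P -> (forall v, List.In v F -> loc_nil P v) ->
  exists2 s, ann_pow_seq F s & ~ P s.
Proof.
move=> pP; elim: F => [|v F IHF] FP; first by exists 1 => //; case: pP.
have [s Fs Ps] := IHF (fun w Fw => FP w (or_intror Fw)).
have [t vt Pt] := FP v (or_introl erefl).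
exists (t * s); last exact: prime_notinM.
move=> w [<-|Fw]; first exact: ideal_mulr (ideal_ann_pow _) vt.
exact: ideal_mull (ideal_ann_pow w) (Fs w Fw).
Qed.

Lemma nilpotent_of_loc_nil x : (forall P, maximal_ideal P -> loc_nil P x) ->
  exists n, x ^+ n = 0.
Proof.
move=> xN; have [n] := ideal1_of_maximal_avoided (ideal_ann_pow x) xN.
by rewrite mul1r; exists n.
Qed.

Lemma comaximal_exprl u w n : u + w = 1 -> exists a b, u ^+ n * a + w * b = 1.
Proof.
move=> uw1; elim: n => [|n [a [b uwn]]].
  by exists 1, 0; rewrite expr0 mulr1 mulr0 addr0.
exists a, (u ^+ n * a + b).
by transitivity (u ^+ n * a * (u + w) + w * b); [rewrite exprS; ring | rewrite uw1 mulr1].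
Qed.

Lemma idempotents_of_comaximal x y n : x + y = 1 -> (x * y) ^+ n.+1 = 0 ->
  exists e f, [/\ e + f = 1, e * f = 0, principal x e & principal y f].
Proof.
move=> xy1 xyn.
have [a [b ab1]] := comaximal_exprl n.+1 xy1.
rewrite addrC in ab1; have [a' [b' ab1']] := comaximal_exprl n.+1 ab1.
exists (x ^+ n.+1 * a * b'), ((y * b) ^+ n.+1 * a'); split.
- by rewrite addrC.
- have -> : x ^+ n.+1 * a * b' * ((y * b) ^+ n.+1 * a') =
            (x * y) ^+ n.+1 * (a * b' * b ^+ n.+1 * a') by rewrite !exprMn; ring.
  by rewrite xyn mul0r.
- by exists (x ^+ n * a * b'); rewrite exprS; ring.
- by exists (y ^+ n * b ^+ n.+1 * a'); rewrite exprMn exprS; ring.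
Qed.

Lemma minspec_compact_ann_pow_cover s : arithmetic_ring R -> minspec_compact R ->
  exists F : seq R, (forall v, List.In v F -> ann_pow s v) /\
    forall r, minimal_prime r -> r s -> exists2 v, List.In v F & ~ r v.
Proof.
move=> ar cp.
pose S y := fun z => z = y /\ (y = s \/ ann_pow s y).
have [|G G_cover] := cp R S.
  move=> r mr; have [rs|rs] := classic (r s); last by exists s, s; do 2 split => //; left.
  by have [y sy ry] := minimal_prime_ann_pow ar mr rs; exists y, y; do 2 split => //; right.
exists (List.filter (fun v => `[< ann_pow s v >]) G); split.
  by move=> v /List.filter_In [_ /asboolP].
move=> r mr rs; have [y Gy [_ [[-> [ys|sy]] ry]]] := G_cover r mr.
  by rewrite ys in ry.
by exists y => //; apply/List.filter_In; split => //; apply/asboolP.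
Qed.

Section Separation.
Hypothesis ar : arithmetic_ring R.
Variables (s : R) (F : seq R).
Hypotheses (F_ann : forall v, List.In v F -> ann_pow s v)
  (F_cover : forall r, minimal_prime r -> r s -> exists2 v, List.In v F & ~ r v).

Lemma ann_pow_mul_seq_loc_nil P x y : maximal_ideal P ->
  ann_pow s x -> ann_pow_seq F y -> loc_nil P (x * y).
Proof.
move=> mP sx Fy; have pN := loc_nil_prime (@ar P mP) (maximal_prime mP).
have [iN _ _] := pN.
have [Ns|Ns] := classic (loc_nil P s).
  have [v Fv Nv] := F_cover (loc_nil_minimal_prime (@ar P mP) (maximal_prime mP)) Ns.
  by apply: ideal_mull iN _; apply: prime_ann_pow pN Nv (Fy v Fv).
by apply: ideal_mulr iN _; apply: prime_ann_pow pN Ns sx.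
Qed.

(* Finiteness of [F] is what lets one element outside [P] kill powers of all
   of [F] at once (lemma [loc_nil_seq]). *)
Lemma maximal_avoids_ann_pow_add P : maximal_ideal P ->
  exists2 z, ideal_add (ann_pow s) (ann_pow_seq F) z & ~ P z.
Proof.
move=> mP; have pP := maximal_prime mP; have pN := loc_nil_prime (@ar P mP) pP.
suff [z [sz|Fz] Pz] : exists2 z, ann_pow s z \/ ann_pow_seq F z & ~ P z.
- by exists z => //; apply: ideal_addl (ideal_ann_pow_seq F) sz.
- by exists z => //; apply: ideal_addr (ideal_ann_pow s) Fz.
have [Ns|Ns] := classic (loc_nil P s); last first.
  have [z Fz Pz] : exists2 z, ann_pow_seq F z & ~ P z.
    by apply: loc_nil_seq pP _ => v Fv; apply: prime_ann_pow pN Ns (F_ann Fv).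
  by exists z; first right.
have [v Fv Nv] := F_cover (loc_nil_minimal_prime (@ar P mP) pP) Ns.
have [k vsk] := F_ann Fv.
have [u [c [Pu [E|E]]]] := @ar P mP (s ^+ k) v.
- exfalso; apply: Nv; exists u => //; exists 2%N.
  by rewrite expr2 mulrA E -mulrA (mulrC _ v) vsk mulr0.
- by exists u => //; left; exists (k + k)%N; rewrite exprD mulrA E -mulrA vsk mulr0.
Qed.

Lemma ann_pow_add_seq_eq1 : exists x y, [/\ ann_pow s x, ann_pow_seq F y & x + y = 1].
Proof.
have [x [y [sx Fy xy]]] := ideal1_of_maximal_avoided
  (ideal_ideal_add (ideal_ann_pow s) (ideal_ann_pow_seq F)) maximal_avoids_ann_pow_add.
by exists x, y.
Qed.

End Separation.

Lemma minimal_primes_comaximal p q : arithmetic_ring R ->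
  minimal_prime p -> minimal_prime q -> ~ (forall x, p x <-> q x) -> ideal_add p q 1.
Proof.
move=> ar mp mq pq; apply: NNPP => pq1.
have [[ip _ _] _] := mp; have [[iq _ _] _] := mq.
have [P mP pqP] := exists_maximal_ideal (ideal_ideal_add ip iq) pq1.
have pP x : p x -> P x by move=> px; apply/pqP/ideal_addl.
have qP x : q x -> P x by move=> qx; apply/pqP/ideal_addr.
have pN := minimal_prime_loc_nil (ar P mP) (maximal_prime mP) mp pP.
have qN := minimal_prime_loc_nil (ar P mP) (maximal_prime mP) mq qP.
by apply: pq => x; rewrite pN qN.
Qed.

Lemma minimal_primes_idempotents p q : arithmetic_ring R -> minspec_compact R ->
  minimal_prime p -> minimal_prime q -> ~ (forall x, p x <-> q x) ->
  exists e f, [/\ e + f = 1, e * f = 0, ~ p e & ~ q f].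
Proof.
move=> ar cp mp mq pq; have [[ip p1 _] _] := mp; have [[iq q1 _] _] := mq.
have [s [t [ps qt st1]]] := minimal_primes_comaximal ar mp mq pq.
have qs : ~ q s by move=> qs; apply: q1; rewrite st1; apply: idealD.
have [F [F_ann F_cover]] := minspec_compact_ann_pow_cover s ar cp.
have [x [y [sx Fy xy1]]] := ann_pow_add_seq_eq1 ar F_ann F_cover.
have [n xyn] := nilpotent_of_loc_nil
  (fun P mP => ann_pow_mul_seq_loc_nil ar F_cover mP sx Fy).
have xyn1 : (x * y) ^+ n.+1 = 0 by rewrite exprS xyn mulr0.
have [e [f [ef1 ef0 [a ea] [b fb]]]] := idempotents_of_comaximal xy1 xyn1.
have qx : q x := prime_ann_pow mq.1 qs sx.
have py : p y by have [v Fv pv] := F_cover _ mp ps; exact: prime_ann_pow mp.1 pv (Fy v Fv).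
exists e, f; split => //.
- by move=> pe; apply: p1; rewrite -ef1 fb; apply: idealD pe (ideal_mull _ ip py).
- by move=> qf; apply: q1; rewrite -ef1 ea; apply: idealD (ideal_mull _ iq qx) qf.
Qed.

End Ideals.

Section Modules.
Variables (R : comPzRingType) (M : lmodType R).
Implicit Types (A B : M -> Prop) (e f : R).

Definition add_scaled A B e : M -> Prop :=
  fun z => exists a b, [/\ A a, B b & z = a + e *: b].

Lemma submodule_add_scaled A B e :
  submodule A -> submodule B -> submodule (add_scaled A B e).
Proof.
move=> [A0 AD AZ] [B0 BD BZ]; split.
- by exists 0, 0; rewrite scaler0 addr0.
- move=> _ _ [a [b [Aa Bb ->]]] [a' [b' [Aa' Bb' ->]]].
  exists (a + a'), (b + b'); split; [exact: AD | exact: BD |].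
  by rewrite scalerDr addrACA.
- move=> r _ [a [b [Aa Bb ->]]]; exists (r *: a), (r *: b).
  by split; [exact: AZ | exact: BZ | rewrite scalerDr !scalerA mulrC].
Qed.

Lemma idempotents_not_indecomposable_factor A B e f :
  submodule A -> submodule B -> (forall x, A x -> B x) ->
  e + f = 1 -> e * f = 0 ->
  ~ (forall b, B b -> A (e *: b)) -> ~ (forall b, B b -> A (f *: b)) ->
  ~ indecomposable_factor A B.
Proof.
move=> sA sB AB ef1 ef0 eB fB [_ indec]; apply: indec.
have [A0 AD AZ] := sA; have [B0 BD BZ] := sB.
have A_sub g x : A x -> add_scaled A B g x.
  by move=> Ax; exists x, 0; rewrite scaler0 addr0.
have sub_B g x : add_scaled A B g x -> B x.
  by case=> [a [b [Aa Bb ->]]]; apply: BD (AB a Aa) (BZ g b Bb).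
have outside_A g : ~ (forall b, B b -> A (g *: b)) ->
    exists x, add_scaled A B g x /\ ~ A x.
  move=> gB; apply: NNPP => none; apply: gB => b Bb; apply: NNPP => Agb.
  by apply: none; exists (g *: b); split => //; exists 0, b; rewrite add0r.
have fe0 : f * e = 0 by rewrite mulrC.
exists (add_scaled A B e), (add_scaled A B f).
do 2 (split; first exact: submodule_add_scaled).
split; first by split=> x; apply: A_sub.
split; first by split=> x; apply: sub_B.
split.
  move=> x; split => [Bx|[c [d [/sub_B Bc [/sub_B Bd ->]]]]]; last exact: BD.
  exists (e *: x), (f *: x).
  split; first by exists 0, x; rewrite add0r.
  split; first by exists 0, x; rewrite add0r.
  by rewrite -scalerDl ef1 scale1r.
split; last by split; apply: outside_A.
move=> x; split => [[[a [b [Aa _ xe]]] [a' [b' [Aa' _ xf]]]]|Ax]; last by split; apply: A_sub.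
have -> : x = e *: a' + f *: a.
  rewrite -{1}[x]scale1r -ef1 scalerDl {1}xf xe !scalerDr !scalerA ef0 fe0.
  by rewrite !scale0r !addr0.
by apply: AD; [apply: AZ | apply: AZ].
Qed.

Lemma fin_generated_regular : fin_generated (R^o : lmodType R).
Proof.
exists 1%N, (fun _ => 1) => m; exists (fun _ => m).
by rewrite big_ord1; change (m = m * 1); rewrite mulr1.
Qed.

End Modules.

Lemma exists_first_not_subset (T : Type) (X : nat -> T -> Prop) (r : T -> Prop) n :
  (forall x, X 0%N x -> r x) -> ~ (forall x, X n x -> r x) ->
  exists i, [/\ (i < n)%N, forall x, X i x -> r x & ~ (forall x, X i.+1 x -> r x)].
Proof.
elim: n => [|n IHn] X0r Xn1r; first by [].
have [Xnr|Xnr] := classic (forall x, X n x -> r x); first by exists n.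
by have [i [ilt Xir Xi1r]] := IHn X0r Xnr; exists i; split => //; apply: leqW.
Qed.

Lemma seq_cover_of_index (T : Type) (D : T -> Prop) (E : T -> T -> Prop)
    (idx : T -> nat -> Prop) n :
  (forall t u i, (i < n)%N -> D t -> D u -> idx t i -> idx u i -> E t u) ->
  (forall t, D t -> exists2 i, (i < n)%N & idx t i) ->
  exists F : seq T, forall t, D t -> exists2 u, List.In u F & E t u.
Proof.
move=> idx_inj idx_ex.
suff [F FP] : exists F : seq T,
    forall t i, (i < n)%N -> D t -> idx t i -> exists2 u, List.In u F & E t u.
  by exists F => t Dt; have [i ilt ti] := idx_ex t Dt; apply: FP ti.
elim: n idx_inj {idx_ex} => [|n IHn] idx_inj; first by exists [::].
have [F FP] := IHn (fun t u i ilt => idx_inj t u i (leqW ilt)).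
have [[u [Du un]]|none] := classic (exists u, D u /\ idx u n).
- exists (u :: F) => t i; rewrite ltnS leq_eqVlt => /orP [/eqP ->|ilt] Dt ti.
    by exists u; [left | apply: idx_inj ti un].
  by have [v Fv tv] := FP t i ilt Dt ti; exists v => //; right.
- exists F => t i; rewrite ltnS leq_eqVlt => /orP [/eqP ->|ilt] Dt ti.
    by exfalso; apply: none; exists t.
  exact: FP ti.
Qed.

Theorem proposition2p9 (R : comPzRingType) :
  arithmetic_ring R ->
  minspec_compact R ->
  (forall M : lmodType R, fin_generated M -> has_pure_indec_cyclic_series M) ->
  minspec_finite R.
Proof.
move=> ar cp series.
have [n [Ms [Ms0 Msn Ms_pure Ms_incr Ms_fac]]] := series _ (fin_generated_regular R).
pose idx r i := (forall x, Ms i x -> r x) /\ ~ (forall x, Ms i.+1 x -> r x).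
apply: (@seq_cover_of_index _ _ _ idx n).
- move=> p q i ilt mp mq [pi pi1] [qi qi1]; apply: NNPP => pq.
  have [e [f [ef1 ef0 pe qf]]] := minimal_primes_idempotents ar cp mp mq pq.
  have [[sA _] [sB _]] := (Ms_pure i (ltnW ilt), Ms_pure i.+1 ilt).
  apply: idempotents_not_indecomposable_factor sA sB (Ms_incr i ilt).1 ef1 ef0 _ _
    (Ms_fac i ilt).2.
  + move=> eB; apply: pi1 => b /eB /pi peb; apply: NNPP => pb.
    exact: prime_notinM mp.1 pe pb peb.
  + move=> fB; apply: qi1 => b /fB /qi qfb; apply: NNPP => qb.
    exact: prime_notinM mq.1 qf qb qfb.
- move=> r [[ir r1 _] _].
  have Ms0r x : Ms 0%N x -> r x by move=> /Ms0 ->; apply: ideal0.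
  have Msnr : ~ (forall x, Ms n x -> r x) by move=> /(_ 1 (Msn 1)).
  by have [i [ilt ri ri1]] := exists_first_not_subset Ms0r Msnr; exists i.
Qed.
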